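(* Let $G$ be a proper interval graph with no twin vertices, let $\sigma$ be a proper interval ordering of $G$, let each node of the line-incompatibility graph $\widehat{G}$ carry a positive weight, and let $I_{\widehat{G}}$ be a maximum-weight independent set of $\widehat{G}$. Let $x,y,z$ be vertices of $G$ with $x\prec y\prec z$ in $\sigma$. If $xz\in I_{\widehat{G}}$, then $xy\in I_{\widehat{G}}$ or $yz\in I_{\widehat{G}}$.
   Context: All graphs are finite, simple and undirected. Two adjacent vertices $u,v$ are twins if $N[u]=N[v]$. A vertex ordering $\sigma$ of $G$ is a proper interval ordering if for all vertices $x\prec y\prec z$ in $\sigma$, $\{x,z\}\in E(G)$ implies $\{x,y\},\{y,z\}\in E(G)$; a graph is a proper interval graph if and only if it admits a proper interval ordering. The line-incompatibility graph $\widehat{G}$ of $G$ has one node $uv$ for each edge $\{u,v\}$ of $G$, two nodes being adjacent iff the corresponding edges are of the form $\{u,v\},\{v,w\}$ with $\{u,w\}\notin E(G)$. A maximum-weight independent set is an independent set maximizing the total weight of its nodes. *)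

From mathcomp Require Import all_boot all_order all_algebra.
Set Implicit Arguments. Unset Strict Implicit. Unset Printing Implicit Defensive.
Import Order.TTheory GRing.Theory Num.Theory.

Definition simple_graph (T : finType) (e : rel T) : Prop :=
  symmetric e /\ irreflexive e.

Definition closed_nbhd (T : finType) (e : rel T) (u : T) : {set T} :=
  [set w | (w == u) || e u w].

Definition twins (T : finType) (e : rel T) (u v : T) : Prop :=
  e u v /\ closed_nbhd e u = closed_nbhd e v.

Definition twin_free (T : finType) (e : rel T) : Prop :=
  forall u v : T, ~ twins e u v.

(* A vertex ordering sigma is encoded by an injective rank function
   sigma : T -> nat;  x \prec y  iff  sigma x < sigma y. *)
Definition proper_interval_ordering (T : finType) (e : rel T) (sigma : T -> nat) : Prop :=
  injective sigma /\
  forall x y z : T, sigma x < sigma y -> sigma y < sigma z -> e x z ->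
    e x y /\ e y z.

Definition lig_node (T : finType) (e : rel T) (A : {set T}) : Prop :=
  exists u v : T, e u v /\ A = [set u; v].

Definition lig_adj (T : finType) (e : rel T) (A B : {set T}) : Prop :=
  exists u v w : T, [/\ e u v, e v w, u != w & ~~ e u w] /\
    A = [set u; v] /\ B = [set v; w].

Definition lig_independent (T : finType) (e : rel T) (I : {set {set T}}) : Prop :=
  (forall A, A \in I -> lig_node e A) /\
  (forall A B, A \in I -> B \in I -> ~ lig_adj e A B).

Definition lig_max_weight_independent (R : numDomainType) (T : finType) (e : rel T)
    (wt : {set T} -> R) (I : {set {set T}}) : Prop :=
  lig_independent e I /\
  forall J : {set {set T}}, lig_independent e J ->
    (\sum_(A in J) wt A <= \sum_(A in I) wt A)%R.

From mathcomp Require Import all_boot all_order all_algebra.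
From Stdlib Require Import Classical.
Set Implicit Arguments. Unset Strict Implicit. Unset Printing Implicit Defensive.
Import Order.TTheory GRing.Theory Num.Theory.

(* Suppose xz is in I but xy and yz are not. By maximality and positivity of
   the weights, xy conflicts with some node of I. It cannot be a node xw with
   w not adjacent to y: compatibility with xz forces w ~ z, and the umbrella
   property then forces w ~ y. So it is a node yw with w not adjacent to x,
   and the umbrella property puts w after z. Symmetrically, yz conflicts with
   a node yw' of I with w' before x and w' not adjacent to z. Then
   w' < x < w and x is not adjacent to w, so w' is not adjacent to w either,
   and yw', yw are two conflicting nodes of I. *)

Lemma set2_eq_cases (T : finType) (a b c d : T) :
  [set a; b] = [set c; d] -> (a = c /\ b = d) \/ (a = d /\ b = c).
Proof.
move=> E.
have ha : a \in [set c; d] by rewrite -E set21.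
have hb : b \in [set c; d] by rewrite -E set22.
have hc : c \in [set a; b] by rewrite E set21.
have hd : d \in [set a; b] by rewrite E set22.
move: ha hb hc hd; rewrite !inE.
by do 4!case/orP=> /eqP ?; subst; auto.
Qed.

Definition umbrella (T : finType) (e lt : rel T) : Prop :=
  forall a b c, lt a b -> lt b c -> e a c -> e a b /\ e b c.

Lemma umbrella_converse (T : finType) (e lt : rel T) :
  symmetric e -> umbrella e lt -> umbrella e (fun a b => lt b a).
Proof.
move=> e_sym lt_umb a b c lba lcb eac.
rewrite e_sym in eac; have [ecb eba] := lt_umb _ _ _ lcb lba eac.
by rewrite e_sym eba e_sym ecb.
Qed.

Section LineIncompatibility.

Variables (T : finType) (e : rel T).
Hypothesis e_sym : symmetric e.

Lemma lig_node_set2 a b : lig_node e [set a; b] -> e a b.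
Proof.
by case=> u [v [euv /set2_eq_cases [[-> ->]|[-> ->]]]]; rewrite // e_sym.
Qed.

Lemma lig_adj_set2 u v w :
  e v u -> e v w -> u != w -> ~~ e u w -> lig_adj e [set v; u] [set v; w].
Proof.
move=> evu evw uw nuw; exists u, v, w.
by split; [split; rewrite // e_sym | rewrite setUC].
Qed.

Lemma lig_adj_irrefl A : ~ lig_adj e A A.
Proof.
case=> u [v [w [[_ _ uw _] [-> /set2_eq_cases [[? ?]|[? _]]]]]];
  by subst; rewrite eqxx in uw.
Qed.

Lemma lig_conflict_set2 a b B :
  lig_adj e [set a; b] B \/ lig_adj e B [set a; b] ->
  exists w, (B = [set a; w] /\ ~~ e b w /\ w != b) \/
            (B = [set b; w] /\ ~~ e a w /\ w != a).
Proof.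
case=> [[u [v [w [[_ _ uw nuw] [/set2_eq_cases EA ->]]]]]
       |[u [v [w [[_ _ uw nuw] [-> /set2_eq_cases EA]]]]]].
- exists w; case: EA => [[? ?]|[? ?]]; subst.
  + by right; rewrite eq_sym.
  + by left; rewrite eq_sym.
- exists u; case: EA => [[? ?]|[? ?]]; subst.
  + by left; rewrite setUC e_sym.
  + by right; rewrite setUC e_sym.
Qed.

Section MaxWeight.

Variables (R : realDomainType) (wt : {set T} -> R) (I : {set {set T}}).
Hypothesis wt_pos : forall A, lig_node e A -> (0 < wt A)%R.
Hypothesis I_max : lig_max_weight_independent e wt I.

Lemma lig_mwis_node_edge a b : [set a; b] \in I -> e a b.
Proof. by case: I_max => -[I_node _] _ /I_node/lig_node_set2. Qed.

Lemma lig_mwis_compatible A B : A \in I -> B \in I -> ~ lig_adj e A B.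
Proof. by case: I_max => -[_ I_indep] _; apply: I_indep. Qed.

(* Otherwise A |: I would be independent and strictly heavier than I. *)
Lemma lig_mwis_conflict A :
  lig_node e A -> A \notin I ->
  exists2 B, B \in I & lig_adj e A B \/ lig_adj e B A.
Proof.
move=> A_node AnI; apply: NNPP => no_conflict.
have compat B : B \in I -> ~ lig_adj e A B /\ ~ lig_adj e B A.
  by move=> BI; split=> adj; apply: no_conflict; exists B; auto.
case: I_max => -[I_node I_indep] I_heaviest.
have AI_indep : lig_independent e (A |: I).
  split=> [C|C D]; rewrite !inE.
    by case/orP=> [/eqP ->|/I_node].
  case/orP=> [/eqP ->|CI] /orP[/eqP ->|DI].
  - exact: lig_adj_irrefl.
  - exact: (compat D DI).1.
  - exact: (compat C CI).2.
  - exact: I_indep.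
have := I_heaviest _ AI_indep; rewrite big_setU1 //= -lerBrDr subrr.
by rewrite leNgt wt_pos.
Qed.

Section Ordered.

Variable lt : rel T.
Hypothesis lt_umbrella : umbrella e lt.
Hypothesis lt_total : forall a b, a != b -> lt a b || lt b a.

Lemma lig_mwis_shared_left x y z w :
  lt x y -> lt y z -> [set x; z] \in I -> [set x; w] \in I -> w != y -> e y w.
Proof.
move=> lxy lyz xzI xwI wy.
have exz := lig_mwis_node_edge xzI; have exw := lig_mwis_node_edge xwI.
have [_ eyz] := lt_umbrella lxy lyz exz.
have [/eqP <- //|zw] := boolP (z == w).
have ezw : e z w.
  apply/negPn/negP=> nzw; apply: (lig_mwis_compatible xzI xwI).
  exact: lig_adj_set2.
case/orP: (lt_total wy) => [lwy|lyw].
- by have [ewy _] := lt_umbrella lwy lyz (etrans (e_sym w z) ezw); rewrite e_sym.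
- by have [_ eyw] := lt_umbrella lxy lyw exw.
Qed.

Lemma lig_mwis_right_witness x y z :
  lt x y -> lt y z ->
  [set x; z] \in I -> [set x; y] \notin I -> [set y; z] \notin I ->
  exists w, [/\ [set y; w] \in I, e y w, ~~ e x w & lt z w].
Proof.
move=> lxy lyz xzI xynI yznI.
have exz := lig_mwis_node_edge xzI.
have [exy _] := lt_umbrella lxy lyz exz.
have xy_node : lig_node e [set x; y] by exists x, y.
have [B BI /lig_conflict_set2 [w [[EB [nyw wy]]|[EB [nxw wx]]]]] :=
  lig_mwis_conflict xy_node xynI.
  by rewrite EB in BI; rewrite (lig_mwis_shared_left lxy lyz xzI BI wy) in nyw.
rewrite EB in BI; have eyw := lig_mwis_node_edge BI.
exists w; split=> //.
case/orP: (lt_total wx) => [lwx|lxw].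
  have [ewx _] := lt_umbrella lwx lxy (etrans (e_sym w y) eyw).
  by rewrite e_sym ewx in nxw.
have [/eqP wz|wz] := boolP (w == z); first by rewrite -wz BI in yznI.
case/orP: (lt_total wz) => [lwz|//].
by have [exw _] := lt_umbrella lxw lwz exz; rewrite exw in nxw.
Qed.

End Ordered.

End MaxWeight.

End LineIncompatibility.

Theorem lemma7 (R : realDomainType) (T : finType) (e : rel T) (sigma : T -> nat)
    (wt : {set T} -> R) (I : {set {set T}}) (x y z : T) :
  simple_graph e ->
  twin_free e ->
  proper_interval_ordering e sigma ->
  (forall A, lig_node e A -> (0 < wt A)%R) ->
  lig_max_weight_independent e wt I ->
  sigma x < sigma y -> sigma y < sigma z ->
  [set x; z] \in I ->
  [set x; y] \in I \/ [set y; z] \in I.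
Proof.
move=> [e_sym _] _ [sigma_inj sigma_umb] wt_pos I_max lxy lyz xzI.
have [xyI|xynI] := boolP ([set x; y] \in I); first by left.
have [yzI|yznI] := boolP ([set y; z] \in I); first by right.
exfalso.
pose lt := [rel a b | sigma a < sigma b].
have lt_total a b : a != b -> lt a b || lt b a.
  by rewrite -(inj_eq sigma_inj) neq_ltn.
have gt_total a b : a != b -> lt b a || lt a b.
  by rewrite orbC; apply: lt_total.
have [w [ywI eyw nxw lzw]] :=
  lig_mwis_right_witness e_sym wt_pos I_max sigma_umb lt_total lxy lyz xzI xynI yznI.
have zxI : [set z; x] \in I by rewrite setUC.
have zynI : [set z; y] \notin I by rewrite setUC.
have yxnI : [set y; x] \notin I by rewrite setUC.
have [w' [yw'I eyw' _ lw'x]] :=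
  lig_mwis_right_witness e_sym wt_pos I_max (umbrella_converse e_sym sigma_umb)
    gt_total lyz lxy zxI zynI yxnI.
have lxw : sigma x < sigma w := ltn_trans lxy (ltn_trans lyz lzw).
apply: (lig_mwis_compatible I_max yw'I ywI); apply: lig_adj_set2 => //.
- by rewrite -(inj_eq sigma_inj) neq_ltn (ltn_trans lw'x lxw).
- by apply/negP=> ew'w; have [_ exw] := sigma_umb _ _ _ lw'x lxw ew'w; rewrite exw in nxw.
Qed.
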